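(* Let $\mathcal G$ be a synchronous game. There is $C>0$ depending only on $|A|$ such that: if $z^i_a\mapsto X^i_a$ is a unitary $\epsilon$-representation of the SynchBCS algebra $\mathscr B(\mathcal G)$ on $\mathbb C^d$ with respect to $\|\cdot\|_f$ (each $X^i_a$ unitary), then $p^i_a\mapsto\frac12(\mathbb 1-X^i_a)$ is a $C\epsilon$-representation of the synchronous algebra $\mathcal A(\mathcal G)$ with respect to $\|\cdot\|_f$.
   Context: A synchronous game has finite input set $I$, output set $A$ (same for both players) and predicate $V:A\times A\times I\times I\to\{0,1\}$ with $V(a,b|i,i)=0$ whenever $a\ne b$. The synchronous algebra $\mathcal A(\mathcal G)$ has generators $p^i_a$ and relations $(p^i_a)^2=p^i_a=(p^i_a)^*$; $\sum_ap^i_a=1$ for each $i$; $p^i_ap^j_b=0$ whenever $V(a,b|i,j)=0$. The SynchBCS algebra $\mathscr B(\mathcal G)$ has generators $z^i_a$ and relations: $z^i_a=(z^i_a)^*$; $(z^i_a)^2=1$; $\frac12(1+z^i_a+z^j_b-z^i_az^j_b)=1$ whenever $V(a,b|i,j)=0$; $\prod_{a\in A}z^i_a=-1$ for each $i$ (product in a fixed order of $A$); $z^i_az^i_{a'}=z^i_{a'}z^i_a$ for all $a,a'$. $\|A\|_f=\mathrm{tr}(A^*A)^{1/2}/\sqrt d$ is the little Frobenius norm on $M_d(\mathbb C)$. An $\epsilon$-representation is an assignment of matrices to generators (extended to a unital $*$-homomorphism of the free $*$-algebra) with $\|\phi(r)\|_f\le\epsilon$ for every defining relation $r$, a relation $a=b$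 meaning $r=a-b$. *)

From mathcomp Require Import all_boot all_order all_algebra.
Set Implicit Arguments. Unset Strict Implicit. Unset Printing Implicit Defensive.
Import Order.TTheory GRing.Theory Num.Theory.
Local Open Scope ring_scope.

(* Complex scalars: an arbitrary numClosedFieldType K (e.g. the complex numbers). *)

Definition adjmx (K : numClosedFieldType) (m n : nat) (M : 'M[K]_(m, n)) : 'M[K]_(n, m) :=
  (map_mx Num.conj M)^T.

Definition normf (K : numClosedFieldType) (n : nat) (M : 'M[K]_n.+1) : K :=
  sqrtC (\tr (adjmx M *m M)) / sqrtC (n.+1)%:R.

Definition unitary_mxP (K : numClosedFieldType) (n : nat) (M : 'M[K]_n.+1) : Prop :=
  adjmx M *m M = 1%:M /\ M *m adjmx M = 1%:M.

Definition synchronous (I A : finType) (V : A -> A -> I -> I -> bool) : Prop :=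
  forall (i : I) (a b : A), a != b -> V a b i i = false.

Definition synchBCS_eps_rep (K : numClosedFieldType) (I A : finType)
  (V : A -> A -> I -> I -> bool) (n : nat) (X : I -> A -> 'M[K]_n.+1) (eps : K) : Prop :=
  [/\ (forall i a, normf (X i a - adjmx (X i a)) <= eps),
      (forall i a, normf (X i a * X i a - 1) <= eps),
      (forall i j a b, V a b i j = false ->
          normf (2%:R^-1 *: (1 + X i a + X j b - X i a * X j b) - 1) <= eps),
      (forall i, normf ((\prod_(a <- enum A) X i a) - (- 1)) <= eps) &
      (forall i a a', normf (X i a * X i a' - X i a' * X i a) <= eps)].

Definition synch_eps_rep (K : numClosedFieldType) (I A : finType)
  (V : A -> A -> I -> I -> bool) (n : nat) (P : I -> A -> 'M[K]_n.+1) (eps : K) : Prop :=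
  [/\ (forall i a, normf (P i a * P i a - P i a) <= eps),
      (forall i a, normf (P i a - adjmx (P i a)) <= eps),
      (forall i, normf ((\sum_(a : A) P i a) - 1) <= eps) &
      (forall i j a b, V a b i j = false -> normf (P i a * P j b) <= eps)].

From mathcomp Require Import all_boot all_order all_algebra.
From mathcomp Require Import ring.
Import Order.TTheory GRing.Theory Num.Theory.
Local Open Scope ring_scope.

(* The relations of the synchronous algebra for P := (1 - X)/2 are, up to
   harmless scalars, relations of the SynchBCS algebra: P^2 - P = (X^2 - 1)/4,
   P - adj P = -(X - adj X)/2 and P_a P_b = -((1 + X_a + X_b - X_a X_b)/2 - 1)/2.
   The only nonlocal relation is sum_a P_a = 1. For pairwise distinct outputs
   a_1, ..., a_k one has X_{a_1} ... X_{a_k} = 1 - 2 sum_j P_{a_j} up to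
   cross terms P_{a_j} P_{a_l}, which are small because the game is
   synchronous; unitarity keeps the errors from growing under left
   multiplication, so the error stays below 16^k eps, and prod_a X_a = -1
   gives sum_a P_a = 1. The weak triangle inequality
   ||A + B||_f <= 2 (||A||_f + ||B||_f) suffices and yields C = 16^|A| + 1. *)

Lemma sqrtC_le2D (K : numClosedFieldType) (t a b : K) : 0 <= t -> 0 <= a -> 0 <= b ->
  t <= 2%:R * a + 2%:R * b -> sqrtC t <= 2%:R * (sqrtC a + sqrtC b).
Proof.
move=> t0 a0 b0 htab.
have x0 : 0 <= sqrtC a by rewrite sqrtC_ge0.
have y0 : 0 <= sqrtC b by rewrite sqrtC_ge0.
have r0 : 0 <= 2%:R * (sqrtC a + sqrtC b) :> K by rewrite mulr_ge0 ?addr_ge0.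
rewrite -(sqrCK r0) ler_sqrtC ?qualifE /= ?exprn_ge0 //.
apply: (le_trans htab); rewrite -{1}(sqrtCK a) -{1}(sqrtCK b) -subr_ge0.
move: (sqrtC a) (sqrtC b) x0 y0 => x y x0 y0.
have -> : (2%:R * (x + y)) ^+ 2 - (2%:R * x ^+ 2 + 2%:R * y ^+ 2)
   = 2%:R * x ^+ 2 + 2%:R * y ^+ 2 + 8%:R * (x * y) by ring.
by rewrite !addr_ge0 ?mulr_ge0 ?exprn_ge0.
Qed.

Section FrobeniusNorm.
Context {K : numClosedFieldType} {n : nat}.
Local Notation M := 'M[K]_n.+1.

Definition frob2 (A : M) : K := \tr (adjmx A *m A).

Lemma frob2E (A : M) : frob2 A = \sum_i \sum_k `|A k i| ^+ 2.
Proof.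
rewrite /frob2 /mxtrace; apply: eq_bigr => i _; rewrite mxE; apply: eq_bigr => k _.
by rewrite /adjmx !mxE normCK mulrC.
Qed.

Lemma frob2_ge0 (A : M) : 0 <= frob2 A.
Proof. by rewrite frob2E; do 2!(apply: sumr_ge0 => ? _); apply: exprn_ge0. Qed.

Lemma frob2D_le (A B : M) : frob2 (A + B) <= 2%:R * frob2 A + 2%:R * frob2 B.
Proof.
rewrite !frob2E !mulr_sumr -big_split /=; apply: ler_sum => i _.
rewrite !mulr_sumr -big_split /=; apply: ler_sum => k _; rewrite mxE.
have parallelogram : `|A k i + B k i| ^+ 2 + `|A k i - B k i| ^+ 2
    = 2%:R * `|A k i| ^+ 2 + 2%:R * `|B k i| ^+ 2.
  by rewrite !normCK !rmorphD !rmorphN /=; ring.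
by rewrite -parallelogram lerDl exprn_ge0.
Qed.

Lemma frob2Z (c : K) (A : M) : frob2 (c *: A) = `|c| ^+ 2 * frob2 A.
Proof.
rewrite !frob2E mulr_sumr; apply: eq_bigr => i _; rewrite mulr_sumr.
by apply: eq_bigr => k _; rewrite mxE normrM exprMn.
Qed.

Lemma adjmxM (A B : M) : adjmx (A *m B) = adjmx B *m adjmx A.
Proof. by rewrite /adjmx map_mxM trmx_mul. Qed.

Lemma frob2_unitaryl (U A : M) : unitary_mxP U -> frob2 (U * A) = frob2 A.
Proof.
by case=> UU _; rewrite /frob2 [U * A]/(_ *m _) adjmxM -mulmxA (mulmxA (adjmx U)) UU mul1mx.
Qed.

Lemma normfE (A : M) : normf A = sqrtC (frob2 A) / sqrtC (n.+1)%:R.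
Proof. by []. Qed.

Lemma normf_ge0 (A : M) : 0 <= normf A.
Proof. by rewrite normfE divr_ge0 ?sqrtC_ge0 ?frob2_ge0 ?ler0n. Qed.

Lemma normfD_le (A B : M) : normf (A + B) <= 2%:R * (normf A + normf B).
Proof.
rewrite !normfE -mulrDl mulrA ler_wpM2r ?invr_ge0 ?sqrtC_ge0 ?ler0n //.
by apply: sqrtC_le2D; rewrite ?frob2_ge0 ?frob2D_le.
Qed.

Lemma normfZ (c : K) (A : M) : normf (c *: A) = `|c| * normf A.
Proof.
by rewrite !normfE frob2Z sqrtCM ?qualifE /= ?exprn_ge0 ?frob2_ge0 // sqrCK // mulrA.
Qed.

Lemma normfN (A : M) : normf (- A) = normf A.
Proof. by rewrite -scaleN1r normfZ normrN1 mul1r. Qed.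

Lemma normf0 : normf (0 : M) = 0.
Proof. by rewrite -(scale0r (0 : M)) normfZ normr0 mul0r. Qed.

Lemma normf_unitaryl (U A : M) : unitary_mxP U -> normf (U * A) = normf A.
Proof. by move=> hU; rewrite !normfE frob2_unitaryl. Qed.

Lemma normf_sum_le (T : eqType) (s : seq T) (F : T -> M) (e : K) : 0 <= e ->
  (forall x, x \in s -> normf (F x) <= e) ->
  normf (\sum_(x <- s) F x) <= 4%:R ^+ size s * e.
Proof.
move=> e0; elim: s => [|x s IH] hF /=; first by rewrite big_nil normf0 expr0 mul1r.
rewrite big_cons; apply: (le_trans (normfD_le _ _)).
have hx : normf (F x) <= e by apply: hF; rewrite mem_head.
have hs : normf (\sum_(y <- s) F y) <= 4%:R ^+ size s * e.
  by apply: IH => y ys; apply: hF; rewrite inE ys orbT.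
have he : e <= 4%:R ^+ size s * e by rewrite ler_peMl // exprn_ege1 ?ler1n.
apply: (le_trans (ler_wpM2l _ (lerD hx hs))) => //.
rewrite -subr_ge0.
have -> : 4%:R ^+ (size s).+1 * e - 2%:R * (e + 4%:R ^+ size s * e)
   = 2%:R * (4%:R ^+ size s * e - e) by rewrite exprS; ring.
by rewrite mulr_ge0 // subr_ge0.
Qed.

End FrobeniusNorm.

Section HalfDifference.
Context {K : numClosedFieldType} {n : nat}.
Local Notation M := 'M[K]_n.+1.
Local Notation w := (2%:R^-1 : K).
Local Notation P x := (w *: (1 - x)).

Lemma normfNw (A : M) : normf (- w *: A) = w * normf A.
Proof. by rewrite normfZ normrN ger0_norm // invr_ge0 ler0n. Qed.

Lemma half_le (y : K) : 0 <= y -> w * y <= y.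
Proof. by move=> y0; rewrite ler_piMl // invr_le1 ?unitfE ?pnatr_eq0 ?ler1n. Qed.

Lemma half_diff_idemE (x : M) : P x * P x - P x = (w * w) *: (x * x - 1).
Proof.
rewrite -scalerAl -scalerAr !(mulrBl, mulrBr, mul1r, mulr1).
by move: (x * x) => z; apply/matrixP => i j; rewrite !mxE; field.
Qed.

Lemma half_diff_adjE (x : M) : P x - adjmx (P x) = - w *: (x - adjmx x).
Proof.
apply/matrixP => i j; rewrite /adjmx !mxE rmorphM rmorphB /= rmorphV ?unitfE ?pnatr_eq0 //.
by rewrite !conjC_nat (eq_sym j i) rmorph_nat; field.
Qed.

Lemma half_diff_mulE (x y : M) :
  P x * P y = - w *: (w *: (1 + x + y - x * y) - 1).
Proof.
rewrite -scalerAl -scalerAr !(mulrBl, mulrBr, mul1r, mulr1).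
by move: (x * y) => z; apply/matrixP => i j; rewrite !mxE; field.
Qed.

Lemma half_diff_idem_le (x : M) (e : K) :
  normf (x * x - 1) <= e -> normf (P x * P x - P x) <= e.
Proof.
move=> le_e; rewrite half_diff_idemE normfZ normrM ger0_norm ?invr_ge0 ?ler0n //.
rewrite -mulrA; apply: le_trans (half_le _ _) (le_trans (half_le _ _) le_e).
  by rewrite mulr_ge0 ?normf_ge0 ?invr_ge0 ?ler0n.
exact: normf_ge0.
Qed.

Lemma half_diff_adj_le (x : M) (e : K) :
  normf (x - adjmx x) <= e -> normf (P x - adjmx (P x)) <= e.
Proof. by move=> le_e; rewrite half_diff_adjE normfNw (le_trans (half_le _ _)) ?normf_ge0. Qed.

Lemma half_diff_mul_le (x y : M) (e : K) :
  normf (w *: (1 + x + y - x * y) - 1) <= e -> normf (P x * P y) <= e.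
Proof. by move=> le_e; rewrite half_diff_mulE normfNw (le_trans (half_le _ _)) ?normf_ge0. Qed.

Lemma prod_sub_half_diff_sum_le (T : eqType) (s : seq T) (X : T -> M) (e : K) :
  0 <= e -> uniq s -> (forall a, a \in s -> unitary_mxP (X a)) ->
  (forall a b, a \in s -> b \in s -> a != b -> normf (P (X a) * P (X b)) <= e) ->
  normf (\prod_(a <- s) X a - (1 - 2%:R *: \sum_(a <- s) P (X a)))
    <= 16%:R ^+ size s * e.
Proof.
move=> e0; elim: s => [|a s IH] /=.
  by rewrite !big_nil scaler0 subr0 subrr normf0 expr0 mul1r.
case/andP=> a_s s_uniq unitX smallX; rewrite !big_cons.
set Q := \prod_(b <- s) X b; set S := \sum_(b <- s) P (X b).
have step : X a * Q - (1 - 2%:R *: (P (X a) + S)) =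
    X a * (Q - (1 - 2%:R *: S)) + 4%:R *: (P (X a) * S).
  rewrite -scalerAl !(mulrBl, mulrBr, mulrDr, mulrDl, mul1r, mulr1) -scalerAr.
  by move: (X a * Q) (X a * S) => z1 z2; apply/matrixP => i j; rewrite !mxE; field.
have le_prod : normf (X a * (Q - (1 - 2%:R *: S))) <= 16%:R ^+ size s * e.
  rewrite normf_unitaryl; last by apply: unitX; rewrite mem_head.
  apply: IH => // [b bs|b c bs cs].
    by apply: unitX; rewrite inE bs orbT.
  by apply: smallX; rewrite inE ?bs ?cs orbT.
have le_cross : normf (4%:R *: (P (X a) * S)) <= 4%:R * (4%:R ^+ size s * e).
  rewrite normfZ ger0_norm ?ler0n // ler_wpM2l ?ler0n // /S mulr_sumr.
  apply: normf_sum_le => // b bs; apply: smallX; rewrite ?mem_head ?inE ?bs ?orbT //.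
  by apply: contraNneq a_s => ->.
rewrite step; apply: (le_trans (normfD_le _ _)).
apply: (le_trans (ler_wpM2l (ler0n _ 2) (lerD le_prod le_cross))).
have le_4_16 : (4%:R : K) ^+ size s <= 16%:R ^+ size s.
  by rewrite lerXn2r ?qualifE /= ?ler0n ?ler_nat.
rewrite -subr_ge0.
have -> : 16%:R ^+ (size s).+1 * e
      - 2%:R * (16%:R ^+ size s * e + 4%:R * (4%:R ^+ size s * e))
    = 8%:R * ((16%:R ^+ size s - 4%:R ^+ size s) * e) + 6%:R * (16%:R ^+ size s * e).
  by rewrite exprS; ring.
by rewrite addr_ge0 // !mulr_ge0 ?subr_ge0 ?exprn_ge0 ?ler0n.
Qed.

Lemma half_diff_sum_le (T : eqType) (s : seq T) (X : T -> M) (e : K) :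
  0 <= e -> uniq s -> (forall a, a \in s -> unitary_mxP (X a)) ->
  (forall a b, a \in s -> b \in s -> a != b -> normf (P (X a) * P (X b)) <= e) ->
  normf (\prod_(a <- s) X a - - 1) <= e ->
  normf (\sum_(a <- s) P (X a) - 1) <= (16%:R ^+ size s + 1) * e.
Proof.
move=> e0 s_uniq unitX smallX le_prod.
set Q := \prod_(a <- s) X a; set S := \sum_(a <- s) P (X a).
have -> : S - 1 = - w *: (- (Q - (1 - 2%:R *: S)) + (Q - - 1)).
  by move: Q S => Q S; apply/matrixP => i j; rewrite !mxE; field.
rewrite normfNw; apply: (le_trans (ler_wpM2l _ (normfD_le _ _))).
  by rewrite invr_ge0 ler0n.
rewrite mulrA mulVf ?pnatr_eq0 // mul1r normfN mulrDl mul1r.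
by apply: lerD => //; apply: prod_sub_half_diff_sum_le.
Qed.

End HalfDifference.

Theorem mainTheorem14 (K : numClosedFieldType) (nA : nat) :
  exists2 C : K, 0 < C &
    forall (I A : finType) (V : A -> A -> I -> I -> bool),
      #|A| = nA -> synchronous V ->
      forall (n : nat) (X : I -> A -> 'M[K]_n.+1) (eps : K),
        (forall i a, unitary_mxP (X i a)) ->
        synchBCS_eps_rep V X eps ->
        synch_eps_rep V (fun i a => 2%:R^-1 *: (1 - X i a)) (C * eps).
Proof.
have C_ge1 : 1 <= 16%:R ^+ nA + 1 :> K by rewrite lerDr exprn_ge0 ?ler0n.
exists (16%:R ^+ nA + 1); first exact: lt_le_trans ltr01 C_ge1.
move=> I A V cardA syncV n X eps unitX [adjX idemX orthX prodX _].
have eps_ge0 (i : I) : 0 <= eps by apply: le_trans (prodX i); apply: normf_ge0.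
have le_C (i : I) (x : K) : x <= eps -> x <= (16%:R ^+ nA + 1) * eps.
  by move=> le_x; rewrite (le_trans le_x) // ler_peMl // (eps_ge0 i).
split=> [i a | i a | i | i j a b Vab].
- exact/(le_C i)/half_diff_idem_le/idemX.
- exact/(le_C i)/half_diff_adj_le/adjX.
- have -> : \sum_(a : A) 2%:R^-1 *: (1 - X i a) =
            \sum_(a <- enum A) 2%:R^-1 *: (1 - X i a) :> 'M[K]_n.+1.
    by rewrite big_enum; apply: eq_bigl.
  rewrite -cardA cardE; apply: half_diff_sum_le (eps_ge0 i) (enum_uniq _) _ _ _ => //.
  by move=> a b _ _ neq_ab; apply/half_diff_mul_le/orthX/syncV.
- exact/(le_C i)/half_diff_mul_le/orthX.
Qed.
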